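(* Let $n\ge1$. The path $P_n$ admits an extended irregular dominating labeling if and only if $n\ne 2,3$.
   Context: $P_n$ is the path on $n$ vertices $[x_1,\dots,x_n]$ with edges $\{x_i,x_{i+1}\}$, $1\le i\le n-1$. In a finite simple graph $\Gamma=(V,E)$ with distance $d$, a vertex $v$ carrying a non-negative integer label $\ell$ dominates (covers) exactly the vertices $u$ with $d(u,v)=\ell$; a vertex labeled $0$ dominates only itself. An extended irregular dominating labeling is a labeling $\lambda:S\to\mathbb{Z}_{\ge0}$ of a set $S\subseteq V$ with distinct labels on distinct vertices, such that every vertex of $V$ is dominated by some vertex of $S$, and some vertex of $S$ has label $0$. *)

From mathcomp Require Import all_boot.
Set Implicit Arguments. Unset Strict Implicit. Unset Printing Implicit Defensive.

Definition walk_of_len (V : finType) (e : rel V) (k : nat) (u v : V) : Prop :=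
  exists s : seq V, [/\ size s = k, path e u s & last u s = v].

Definition gdist_is (V : finType) (e : rel V) (u v : V) (k : nat) : Prop :=
  walk_of_len e k u v /\ forall j, j < k -> ~ walk_of_len e j u v.

Definition dominates (V : finType) (e : rel V) (v : V) (l : nat) (u : V) : Prop :=
  gdist_is e u v l.

Definition ext_irr_dom_labeling (V : finType) (e : rel V)
    (S : {set V}) (lam : V -> nat) : Prop :=
  [/\ {in S &, injective lam},
      (forall u : V, exists2 v, v \in S & dominates e v (lam v) u)
    & exists2 v, v \in S & lam v = 0].

Definition has_ext_irr_dom_labeling (V : finType) (e : rel V) : Prop :=
  exists (S : {set V}) (lam : V -> nat), ext_irr_dom_labeling e S lam.

(* The path P_n on vertices x_1..x_n, here x_{i+1} = i : 'I_n,
   with edges {x_i, x_{i+1}} *)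
Definition path_rel (n : nat) : rel 'I_n :=
  fun i j => (i.+1 == j :> nat) || (j.+1 == i :> nat).
Arguments path_rel : clear implicits.

From mathcomp Require Import all_boot zify.

(* On P_n the distance between i and j is |i - j|.  In a labeling, every vertex
   u other than the zero-labelled vertex z is dominated by some v distinct
   from both u and z; this is impossible on P_2, and on P_3 it forces the two
   vertices other than z to dominate each other, so they carry equal labels.
   Conversely P_1 and P_4 are labelled by hand, and P_5, P_6 have labelings in
   which the first vertex is unlabelled and all labels are below n.  Such a
   labeling of P_n extends to one of P_(n+2) with the same properties: shift it
   one vertex to the right and label the new second vertex n and the new last
   vertex n+1; these labels are new and dominate the two new end vertices. *)

Set Implicit Arguments.
Unset Strict Implicit.
Unset Printing Implicit Defensive.

Definition distn (u v : nat) : nat := (u - v) + (v - u).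

Lemma path_walk_distn_le n (u : 'I_n) (s : seq 'I_n) :
  path (path_rel n) u s -> distn u (last u s) <= size s.
Proof.
elim: s u => [|w s IHs] u /=; first by rewrite /distn; lia.
case/andP=> /orP[/eqP|/eqP] uw /IHs; rewrite /distn; lia.
Qed.

Lemma path_walk_distn n (u v : 'I_n) : walk_of_len (path_rel n) (distn u v) u v.
Proof.
suff walk_d d :
    forall u : 'I_n, distn u v = d -> walk_of_len (path_rel n) d u v.
  exact: walk_d.
elim: d => [|d IHd] {}u duv.
  exists [::]; split=> //=.
  by apply: val_inj; move: duv; rewrite /distn /=; lia.
have [w uw dwv] : exists2 w : 'I_n, path_rel n u w & distn w v = d.
  have v_lt := ltn_ord v; have u_lt := ltn_ord u.
  have [uv | vu] := ltnP u v.
  - have w_lt : u.+1 < n by lia.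
    exists (Ordinal w_lt); first by rewrite /path_rel /= eqxx.
    by move: duv; rewrite /distn /=; lia.
  - have w_lt : u.-1 < n by lia.
    exists (Ordinal w_lt); rewrite /path_rel /=;
      by move: duv; rewrite /distn; lia.
have [s [<- ws sv]] := IHd w dwv.
by exists (w :: s); split=> //=; rewrite uw.
Qed.

Lemma path_gdistE n (u v : 'I_n) k :
  gdist_is (path_rel n) u v k <-> k = distn u v.
Proof.
split=> [[[s [<- us sv]] k_min] | ->].
  have := path_walk_distn_le us; rewrite sv => le_dist.
  apply/eqP; rewrite eqn_leq le_dist andbT leqNgt; apply/negP => lt_dist.
  exact: k_min _ lt_dist (path_walk_distn u v).
split=> [|j lt_j [s [sj us sv]]]; first exact: path_walk_distn.
by have := path_walk_distn_le us; rewrite sv sj leqNgt lt_j.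
Qed.

Definition path_labeling (n : nat) (S : pred nat) (lab : nat -> nat) : Prop :=
  [/\ {in [pred v | (v < n) && S v] &, injective lab},
      forall u, u < n -> exists2 v, (v < n) && S v & lab v = distn u v
    & exists2 z, (z < n) && S z & lab z = 0].

Lemma has_ext_irr_dom_labelingP n :
  has_ext_irr_dom_labeling (path_rel n.+1) <->
  exists S lab, path_labeling n.+1 S lab.
Proof.
split=> [[S [lam [lam_inj dom [z zS z0]]]] | [S [lab [lab_inj cov [z zS z0]]]]].
  exists (fun v => inord v \in S), (fun v => lam (inord v)); split.
  - move=> u v /andP[u_lt uS] /andP[v_lt vS] /(lam_inj _ _ uS vS) /(congr1 val).
    by rewrite /= !inordK.
  - move=> u u_lt; have [v vS] := dom (inord u).
    rewrite /dominates path_gdistE inordK // => lam_v.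
    by exists v; rewrite inord_val ?vS ?ltn_ord.
  - by exists z; rewrite inord_val ?zS ?ltn_ord.
exists [set v : 'I_n.+1 | S v], (fun v : 'I_n.+1 => lab v); split.
- move=> u v; rewrite !inE => uS vS /lab_inj eq_uv; apply: val_inj.
  by apply: eq_uv; rewrite inE ltn_ord.
- move=> u; have [v /andP[v_lt vS] lab_v] := cov u (ltn_ord u).
  by exists (Ordinal v_lt); rewrite ?inE // /dominates path_gdistE.
- by move: zS => /andP[z_lt zS]; exists (Ordinal z_lt); rewrite ?inE.
Qed.

Section Obstructions.

Variables (S : pred nat) (lab : nat -> nat).

(* [v <> z] since the zero label dominates only [z] itself, and [v <> u] since
   otherwise [u] would carry a second zero label. *)
Lemma path_labeling_cover_other n z u :
  path_labeling n S lab -> (z < n) && S z -> lab z = 0 -> u < n -> u != z ->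
  exists v, [/\ (v < n) && S v, v != z, v != u & lab v = distn u v].
Proof.
move=> [lab_inj cov _] zS z0 u_lt /eqP u_z.
have [v vS lab_v] := cov u u_lt; exists v; split=> //.
- by apply/eqP=> v_z; move: lab_v; rewrite v_z z0 /distn; lia.
- apply/eqP=> v_u; apply: u_z; rewrite -v_u; apply: lab_inj => //.
  by rewrite lab_v z0 v_u /distn subnn.
Qed.

Lemma no_path_labeling2 : ~ path_labeling 2 S lab.
Proof.
move=> hlab; have [_ _ [z zS z0]] := hlab.
have z_lt : z < 2 by case/andP: zS.
have u_lt : 1 - z < 2 by lia.
have u_z : 1 - z != z by lia.
have [v [/andP[v_lt _] v_z v_u _]] :=
  path_labeling_cover_other hlab zS z0 u_lt u_z.
by move: v_z v_u; lia.
Qed.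

Lemma no_path_labeling3 : ~ path_labeling 3 S lab.
Proof.
move=> hlab; have [lab_inj _ [z zS z0]] := hlab.
have z_lt : z < 3 by case/andP: zS.
have u1_lt : (z + 1) %% 3 < 3 by lia.
have u2_lt : (z + 2) %% 3 < 3 by lia.
have u1_z : (z + 1) %% 3 != z by lia.
have u2_z : (z + 2) %% 3 != z by lia.
have [v1 [v1S v1_z v1_u1 lab_v1]] :=
  path_labeling_cover_other hlab zS z0 u1_lt u1_z.
have [v2 [v2S v2_z v2_u2 lab_v2]] :=
  path_labeling_cover_other hlab zS z0 u2_lt u2_z.
have v1_v2 : v1 = v2.
  apply: lab_inj => //; rewrite lab_v1 lab_v2.
  by move: v1S v2S v1_z v2_z v1_u1 v2_u2; rewrite /distn; lia.
by move: v1S v1_z v1_u1 v2_z v2_u2; rewrite v1_v2; lia.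
Qed.

End Obstructions.

Definition extendable_labeling (n : nat) (S : pred nat) (lab : nat -> nat)
    : Prop :=
  [/\ path_labeling n S lab, ~~ S 0
    & {in [pred v | (v < n) && S v], forall v, lab v < n}].

Lemma extendable_labeling_add2 n S lab :
  extendable_labeling n S lab ->
  extendable_labeling n.+2 (fun v => [|| v == 1, v == n.+1 | S v.-1])
    (fun v => if v == 1 then n else if v == n.+1 then n.+1 else lab v.-1).
Proof.
move=> [[lab_inj cov [z zS z0]] S0 lab_lt].
set S' := fun v => _; set lab' := fun v => _.
have S_pos v : S v -> 0 < v by case: v => // S_0; rewrite S_0 in S0.
have n_pos : 0 < n by case/andP: zS; lia.
have lab'1 : lab' 1 = n by rewrite /lab' eqxx.
have lab'n : lab' n.+1 = n.+1 by rewrite /lab' eqxx gtn_eqF.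
have S'1 : S' 1 by rewrite /S' eqxx.
have S'n : S' n.+1 by rewrite /S' eqxx orbT.
have S'_old v : S v -> S' v.+1 by rewrite /S' /= => ->; rewrite !orbT.
have lab'_old v : S v -> v < n -> lab' v.+1 = lab v.
  move=> /S_pos v_pos v_lt.
  by rewrite /lab' /= !eqSS (gtn_eqF v_pos) (ltn_eqF v_lt).
have S'_cases v : v < n.+2 -> S' v ->
    [\/ v = 1, v = n.+1 |
        [/\ 1 < v <= n, S v.-1, lab' v = lab v.-1 & lab v.-1 < n]].
  rewrite /S' /lab' /=.
  case: eqP => [-> | v1] v_lt; first by move=> _; exact: Or31.
  case: eqP => [-> | vn] /= vS; first exact: Or32.
  have v_pos := S_pos _ vS; apply: Or33; split=> //; first lia.
  by apply: lab_lt; rewrite inE vS andbT; lia.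
split; [split | by [] | ].
- move=> u v /andP[u_lt /(S'_cases _ u_lt) u_in].
  move=> /andP[v_lt /(S'_cases _ v_lt) v_in].
  case: u_in => [->|->|[u_in uS -> u_lab]];
    case: v_in => [->|->|[v_in vS -> v_lab]]; rewrite ?lab'1 ?lab'n; try lia.
  by move/lab_inj; rewrite !inE uS vS; lia.
- move=> u u_lt.
  have [-> | u_pos] := posnP u.
    by exists n.+1; rewrite ?S'n ?lab'n /distn; lia.
  have [-> | u_n] := eqVneq u n.+1.
    by exists 1; rewrite ?S'1 ?lab'1 /distn; lia.
  have [v /andP[v_lt vS] lab_v] := cov u.-1 ltac:(lia).
  exists v.+1; first by rewrite (S'_old _ vS) andbT ltnS ltnW.
  by rewrite lab'_old // lab_v /distn; lia.
- move: zS => /andP[z_lt zS]; exists z.+1; last by rewrite lab'_old.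
  by rewrite (S'_old _ zS) andbT ltnS ltnW.
- move=> v /andP[v_lt /(S'_cases _ v_lt) [->|->|[_ _ -> ?]]];
    by rewrite ?lab'1 ?lab'n; lia.
Qed.

Lemma extendable_labeling_add_double n k :
  (exists S lab, extendable_labeling n S lab) ->
  exists S lab, extendable_labeling (n + k.*2) S lab.
Proof.
move=> ext_n; elim: k => [|k [S [lab /extendable_labeling_add2 ext]]].
  by rewrite addn0.
by rewrite doubleS !addnS; do 2!eexists; exact: ext.
Qed.

Lemma path_labeling1 : path_labeling 1 predT (fun=> 0).
Proof.
split; last by exists 0.
- by move=> [|?] [|?].
- by move=> [|?] // _; exists 0.
Qed.

Lemma path_labeling4 : path_labeling 4 predT (nth 0 [:: 1; 2; 0; 3]).
Proof.
split; last by exists 2.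
- by move=> [|[|[|[|?]]]] [|[|[|[|?]]]].
- by move=> [|[|[|[|?]]]] // _; [exists 3 | exists 0 | exists 2 | exists 1].
Qed.

Lemma extendable_labeling5 :
  extendable_labeling 5 (fun v => v != 0) (nth 0 [:: 0; 1; 2; 0; 3]).
Proof.
split=> //; last by move=> [|[|[|[|[|?]]]]].
split; last by exists 3.
- by move=> [|[|[|[|[|?]]]]] [|[|[|[|[|?]]]]].
- by move=> [|[|[|[|[|?]]]]] // _;
    [exists 1 | exists 4 | exists 1 | exists 3 | exists 2].
Qed.

Lemma extendable_labeling6 :
  extendable_labeling 6 (mem [:: 1; 2; 4; 5]) (nth 0 [:: 0; 0; 2; 0; 1; 3]).
Proof.
split=> //; last by move=> [|[|[|[|[|[|?]]]]]].
split; last by exists 1.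
- by move=> [|[|[|[|[|[|?]]]]]] [|[|[|[|[|[|?]]]]]].
- by move=> [|[|[|[|[|[|?]]]]]] // _;
    [exists 2 | exists 1 | exists 5 | exists 4 | exists 2 | exists 4].
Qed.

Lemma exists_path_labeling n :
  0 < n -> n != 2 -> n != 3 -> exists S lab, path_labeling n S lab.
Proof.
case: n => [|[|[|[|[|m]]]]] // _ _ _.
- by exists predT, (fun=> 0); exact: path_labeling1.
- by exists predT, (nth 0 [:: 1; 2; 0; 3]); exact: path_labeling4.
have [S [lab [hlab _ _]]] :
    exists S lab, extendable_labeling (5 + odd m + m./2.*2) S lab.
  apply: extendable_labeling_add_double.
  case: (odd m); do 2!eexists.
  - exact: extendable_labeling6.
  - exact: extendable_labeling5.
have -> : m.+4.+1 = 5 + odd m + m./2.*2 by rewrite -addnA odd_double_half.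
by exists S, lab.
Qed.

Theorem proposition5p5 (n : nat) :
  1 <= n -> (has_ext_irr_dom_labeling (path_rel n) <-> (n != 2) && (n != 3)).
Proof.
case: n => // m _; rewrite has_ext_irr_dom_labelingP; split.
- move=> [S [lab hlab]].
  apply/andP; split; apply/eqP=> m_eq; rewrite m_eq in hlab.
  + exact: no_path_labeling2 hlab.
  + exact: no_path_labeling3 hlab.
- by case/andP=> m2 m3; apply: exists_path_labeling.
Qed.
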